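(* Let $b \ge 2$ be an integer, let $m = 2b+1$, and let $f(x) = x^{2b+1} + x^{b+1} + x^{b} + x + 1 \in \mathbb{F}_2[x]$. There is a fixed, input-independent straight-line program using no AND operations and exactly $6b+1 = 3m-2$ two-input XOR operations, of XOR depth $3$ (i.e. time delay $3T_X$), which, on input the coefficient bits $d_0,\dots,d_{2m-2}$ of an arbitrary polynomial $D(x)=\sum_{i=0}^{2m-2} d_i x^i \in \mathbb{F}_2[x]$ of degree at most $2m-2$, outputs the $m$ coefficient bits of the remainder of $D$ upon division by $f$ (the unique polynomial of degree less than $m$ congruent to $D$ modulo $f$).
   Context: A straight-line program (bit-parallel circuit) over $\mathbb{F}_2$ here is a sequence of gates, each computing the XOR (sum in $\mathbb{F}_2$) of two values that are either input bits or outputs of earlier gates; each output bit is an input bit or a gate output. The number of XOR operations is the number of gates. $T_X$ denotes the delay of one 2-input XOR gate, and the time delay of the program is $T_X$ times the maximum number of gates on any path from an input to an output. *)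

From HB Require Import structures.
From mathcomp Require Import all_boot all_order all_algebra.
Set Implicit Arguments. Unset Strict Implicit. Unset Printing Implicit Defensive.
Import GRing.Theory.
Local Open Scope ring_scope.

(* A straight-line program (bit-parallel XOR circuit) over F_2 with [n] input
   bits.  Wires are numbered: wires 0..n-1 are the inputs, wire n+j is the
   output of gate j.  Gate j is a pair (a, c) of wire indices and computes
   wire a XOR wire c; it may only use earlier wires (a, c < n + j). *)
Record slp := SLP { slp_gates : seq (nat * nat); slp_outs : seq nat }.

Definition slp_wf (n : nat) (P : slp) : bool :=
  [&& all (fun j => ((nth (0,0)%N (slp_gates P) j).1 < n + j)%N &&
                    ((nth (0,0)%N (slp_gates P) j).2 < n + j)%N)
          (iota 0 (size (slp_gates P)))
    & all (fun o => (o < n + size (slp_gates P))%N) (slp_outs P)].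

Definition slp_xors (P : slp) : nat := size (slp_gates P).

Definition slp_wires (inp : seq 'F_2) (gs : seq (nat * nat)) : seq 'F_2 :=
  foldl (fun w g => rcons w (nth 0 w g.1 + nth 0 w g.2)) inp gs.

Definition slp_wire_depths (n : nat) (gs : seq (nat * nat)) : seq nat :=
  foldl (fun w g => rcons w (maxn (nth 0%N w g.1) (nth 0%N w g.2)).+1)
        (nseq n 0%N) gs.

(* time delay in units of T_X: maximal number of gates on a path from an
   input to an output *)
Definition slp_depth (n : nat) (P : slp) : nat :=
  \max_(o <- slp_outs P) nth 0%N (slp_wire_depths n (slp_gates P)) o.

Definition slp_out (P : slp) (inp : seq 'F_2) (k : nat) : 'F_2 :=
  nth 0 (slp_wires inp (slp_gates P)) (nth 0%N (slp_outs P) k).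

Definition pentanomial (b : nat) : {poly 'F_2} :=
  'X^(2 * b + 1) + 'X^(b + 1) + 'X^b + 'X + 1.

From HB Require Import structures.
From mathcomp Require Import all_boot all_order all_algebra.
From mathcomp Require Import zify ring.

Set Implicit Arguments.
Unset Strict Implicit.
Unset Printing Implicit Defensive.
Import GRing.Theory.

(* Let m = 2b+1 and f = x^m + g with g = x^(b+1) + x^b + x + 1.  Split
   D = L + x^m H with deg L < m and deg H < 2b.  As x^m = g mod f, D = L + H g,
   and writing H g = A + x^m B with deg A < m gives D = L + A + B g mod f; since
   deg B < b this last polynomial already is the remainder.
   Let d_i be the input bits, h_j = d_(m+j) the coefficients of H and
   u_j = h_j + h_(j+1).  Because g = (x^b + 1)(x + 1), the coefficients of H g
   and of B g (whose t-th coefficient is u_(b+t)) involve at most two u's and h_0,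
   and in characteristic 2 the remainder coefficients are
     r_0 = d_0 + h_0 + u_b,       r_k = d_k + u_(k-1) + u_(b+k-1) + u_(b+k)  (0 < k < b),
     r_b = d_b + h_0 + u_(b-1) + u_b + u_(2b-1),
     r_k = d_k + u_(k-b-1) + u_k  (b < k < 2b),      r_2b = d_2b + u_(b-1).
   The first layer forms u_0, ..., u_(2b-2) (u_(2b-1) = h_(2b-1) is an input bit)
   and d_b + u_(2b-1); the second forms the 2b+1 shared partial sums
   u_k + u_(b+k+1) and d_(k+1) + u_(b+k) for k < b-1, h_0 + u_b,
   d_b + u_(2b-1) + u_(b-1) and r_2b; every other output is the XOR of two earlier
   wires. *)

Definition reads_below (n : nat) (gs : seq (nat * nat)) : bool :=
  all (fun g => (g.1 < n) && (g.2 < n)) gs.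

Lemma reads_below_cat n G1 G2 :
  reads_below n (G1 ++ G2) = reads_below n G1 && reads_below n G2.
Proof. exact: all_cat. Qed.

Lemma reads_below_iota n (f : nat -> nat * nat) c :
  (forall k, k < c -> ((f k).1 < n) && ((f k).2 < n)) ->
  reads_below n [seq f k | k <- iota 0 c].
Proof.
by move=> fP; rewrite /reads_below all_map; apply/allP => k; rewrite mem_iota => /fP.
Qed.

Lemma reads_below_le n n' gs : n <= n' -> reads_below n gs -> reads_below n' gs.
Proof.
move=> le_n; apply: sub_all => g /andP[lt1 lt2].
by rewrite (leq_trans lt1 le_n) (leq_trans lt2 le_n).
Qed.

Lemma nth_cat_map_iota (T : Type) (x0 : T) (f : nat -> T) c r p :
  p < c -> nth x0 ([seq f i | i <- iota 0 c] ++ r) p = f p.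
Proof.
by move=> lt_p; rewrite nth_cat size_map size_iota lt_p (nth_map 0) ?nth_iota ?size_iota.
Qed.

Lemma nth_cat_map_iota_tail (T : Type) (x0 : T) (f : nat -> T) c r p :
  nth x0 ([seq f i | i <- iota 0 c] ++ r) (c + p) = nth x0 r p.
Proof. by rewrite nth_cat size_map size_iota ltnNge leq_addr addKn. Qed.

Section Layers.
Variables (A : Type) (x0 : A) (op : A -> A -> A).

Definition gate_step (w : seq A) (g : nat * nat) : seq A :=
  rcons w (op (nth x0 w g.1) (nth x0 w g.2)).

Definition eval_layer (w : seq A) (gs : seq (nat * nat)) : seq A :=
  w ++ [seq op (nth x0 w g.1) (nth x0 w g.2) | g <- gs].

Lemma size_eval_layer w gs : size (eval_layer w gs) = size w + size gs.
Proof. by rewrite size_cat size_map. Qed.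

Lemma nth_eval_layer_old w gs i : i < size w -> nth x0 (eval_layer w gs) i = nth x0 w i.
Proof. by move=> lt_i; rewrite nth_cat lt_i. Qed.

Lemma foldl_gate_step w gs :
  reads_below (size w) gs -> foldl gate_step w gs = eval_layer w gs.
Proof.
elim: gs w => [|g gs IHgs] w /=; first by rewrite /eval_layer cats0.
case/andP=> /andP[g1 g2] gsP; rewrite IHgs; last first.
  by apply: reads_below_le gsP; rewrite size_rcons.
rewrite /eval_layer /gate_step -cats1 -catA /=; congr (_ ++ _ :: _).
by apply/eq_in_map => g' /(allP gsP) /andP[? ?]; rewrite !nth_cat !ifT.
Qed.

Lemma nth_eval_layer_gate w gs j :
  reads_below (size w) gs -> j < size gs ->
  let W := eval_layer w gs in
  nth x0 W (size w + j) = op (nth x0 W (nth (0, 0) gs j).1) (nth x0 W (nth (0, 0) gs j).2).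
Proof.
move=> gsP lt_j W; have /(allP gsP) /andP[lt1 lt2] := mem_nth (0, 0) lt_j.
rewrite (nth_eval_layer_old _ lt1) (nth_eval_layer_old _ lt2) nth_cat ltnNge leq_addr addKn.
by rewrite (nth_map (0, 0)).
Qed.

Section ThreeLayers.
Variables (w : seq A) (G1 G2 G3 : seq (nat * nat)).
Hypotheses (reads1 : reads_below (size w) G1)
  (reads2 : reads_below (size w + size G1) G2)
  (reads3 : reads_below (size w + size G1 + size G2) G3).

Local Notation W1 := (eval_layer w G1).
Local Notation W2 := (eval_layer W1 G2).
Local Notation W3 := (eval_layer W2 G3).

Lemma foldl_gate_step_layers3 : foldl gate_step w (G1 ++ G2 ++ G3) = W3.
Proof. by rewrite !foldl_cat !foldl_gate_step ?size_eval_layer. Qed.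

Lemma nth_layers3_W2 i : i < size W2 -> nth x0 W3 i = nth x0 W2 i.
Proof. exact: nth_eval_layer_old. Qed.

Lemma nth_layers3_W1 i : i < size W1 -> nth x0 W3 i = nth x0 W1 i.
Proof.
move=> lt_i; have lt_i2 : i < size W2 by rewrite size_eval_layer ltn_addr.
by rewrite (nth_eval_layer_old _ lt_i2) (nth_eval_layer_old _ lt_i).
Qed.

Lemma nth_layers3_input i : i < size w -> nth x0 W3 i = nth x0 w i.
Proof.
move=> lt_i; have lt_i1 : i < size W1 by rewrite size_eval_layer ltn_addr.
by rewrite (nth_layers3_W1 lt_i1) (nth_eval_layer_old _ lt_i).
Qed.

Lemma nth_layers3_gate1 j : j < size G1 ->
  nth x0 W3 (size w + j) =
  op (nth x0 W3 (nth (0, 0) G1 j).1) (nth x0 W3 (nth (0, 0) G1 j).2).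
Proof.
move=> lt_j; have /(allP reads1) /andP[lt1 lt2] := mem_nth (0, 0) lt_j.
have inW1 i : i < size w -> i < size W1 by move=> lt_i; rewrite size_eval_layer ltn_addr.
rewrite (nth_layers3_W1 (inW1 _ lt1)) (nth_layers3_W1 (inW1 _ lt2)) nth_layers3_W1.
  exact: nth_eval_layer_gate.
by rewrite size_eval_layer ltn_add2l.
Qed.

Lemma nth_layers3_gate2 j : j < size G2 ->
  nth x0 W3 (size w + size G1 + j) =
  op (nth x0 W3 (nth (0, 0) G2 j).1) (nth x0 W3 (nth (0, 0) G2 j).2).
Proof.
move=> lt_j; have /(allP reads2) /andP[lt1 lt2] := mem_nth (0, 0) lt_j.
have inW2 i : i < size w + size G1 -> i < size W2.
  by move=> lt_i; rewrite !size_eval_layer ltn_addr.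
rewrite (nth_layers3_W2 (inW2 _ lt1)) (nth_layers3_W2 (inW2 _ lt2)) nth_layers3_W2.
  by rewrite -size_eval_layer; apply: nth_eval_layer_gate; rewrite ?size_eval_layer.
by rewrite !size_eval_layer ltn_add2l.
Qed.

Lemma nth_layers3_gate3 j : j < size G3 ->
  nth x0 W3 (size w + size G1 + size G2 + j) =
  op (nth x0 W3 (nth (0, 0) G3 j).1) (nth x0 W3 (nth (0, 0) G3 j).2).
Proof.
move=> lt_j; rewrite -!size_eval_layer.
by apply: nth_eval_layer_gate; rewrite ?size_eval_layer.
Qed.

End ThreeLayers.
End Layers.

Definition gates_wf (n : nat) (gs : seq (nat * nat)) : bool :=
  all (fun j => ((nth (0, 0) gs j).1 < n + j) && ((nth (0, 0) gs j).2 < n + j))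
      (iota 0 (size gs)).

Lemma gates_wf_cat n G1 G2 :
  gates_wf n G1 -> reads_below (n + size G1) G2 -> gates_wf n (G1 ++ G2).
Proof.
move=> wf1 r2; apply/allP => j; change nat in j.
rewrite mem_iota size_cat add0n => /andP[_ lt_j].
rewrite nth_cat; case: (ltnP j (size G1)) => [lt_j1 | le_j1].
  by move/allP: wf1 => /(_ j); rewrite mem_iota lt_j1; apply.
have lt_j2 : j - size G1 < size G2 by lia.
have /(allP r2) /andP[lt1 lt2] := mem_nth (0, 0) lt_j2.
have le_n : n + size G1 <= n + j by rewrite leq_add2l.
by rewrite (leq_trans lt1 le_n) (leq_trans lt2 le_n).
Qed.

Lemma slp_wf_layers3 n G1 G2 G3 outs :
  reads_below n G1 -> reads_below (n + size G1) G2 ->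
  reads_below (n + size G1 + size G2) G3 ->
  all (fun o => o < n + size (G1 ++ G2 ++ G3)) outs ->
  slp_wf n (SLP (G1 ++ G2 ++ G3) outs).
Proof.
move=> r1 r2 r3 outsP; apply/andP; split=> //.
change (gates_wf n (G1 ++ G2 ++ G3)).
have wf1 : gates_wf n G1 by rewrite -[G1]cat0s; apply: gates_wf_cat; rewrite /= ?addn0.
have wf12 : gates_wf n (G1 ++ G2) by apply: gates_wf_cat.
by rewrite catA; apply: gates_wf_cat; rewrite // size_cat addnA.
Qed.

Definition depth_step (a c : nat) : nat := (maxn a c).+1.

Lemma eval_layer_depth_le c w gs :
  all (fun x => x <= c) w -> all (fun x => x <= c.+1) (eval_layer 0 depth_step w gs).
Proof.
move=> wP; rewrite all_cat all_map; apply/andP; split.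
  by apply: sub_all wP => x /= /leqW.
apply/allP => g _ /=; rewrite ltnS geq_max.
have nthP i : nth 0 w i <= c.
  by case: (ltnP i (size w)) => [/(mem_nth 0) /(allP wP) | /(nth_default 0) ->].
by rewrite !nthP.
Qed.

Section PolyReduction.
Local Open Scope ring_scope.

Lemma modp_XnD_fold2 (F : fieldType) (m : nat) (g D : {poly F}) :
  (size g <= m)%N -> (size D + 2 * size g <= 3 * m + 2)%N ->
  let H := drop_poly m D in
  D %% ('X^m + g) = take_poly m D - take_poly m (H * g) + drop_poly m (H * g) * g.
Proof.
move=> size_g size_D H; set A := take_poly m (H * g); set B := drop_poly m (H * g).
have size_f : size ('X^m + g) = m.+1 by rewrite size_polyDl size_polyXn.
symmetry; apply: (@modpP _ _ (H - B)).
  have HgE : H * g = A + B * 'X^m by rewrite poly_take_drop.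
  rewrite -{1}(poly_take_drop m D) -/H mulrBl mulrDr HgE; ring.
have size_H : size H = (size D - m)%N by rewrite size_drop_poly.
have size_B : size B = (size (H * g)%R - m)%N by rewrite size_drop_poly.
have size_Hg := size_polyMleq H g; have size_Bg := size_polyMleq B g.
have size_Bg_le : (size (B * g)%R <= m)%N by lia.
rewrite size_f ltnS; apply: (leq_trans (size_polyD _ _)); rewrite geq_max size_Bg_le andbT.
apply: (leq_trans (size_polyD _ _)); rewrite geq_max size_take_poly size_polyN.
exact: size_take_poly.
Qed.

Definition pentanomial_tail {R : ringType} (b : nat) : {poly R} :=
  'X^(b + 1) + 'X^b + 'X + 1.

Lemma pentanomialE b : pentanomial b = 'X^(2 * b + 1) + pentanomial_tail b.
Proof. by rewrite /pentanomial /pentanomial_tail !addrA. Qed.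

Section TailCoefficients.
Variables (R : ringType) (b : nat).
Implicit Type p : {poly R}.
Local Notation tail := (pentanomial_tail b : {poly R}).

Lemma size_pentanomial_tail : (size tail <= b + 2)%N.
Proof.
have size_D_le (p q : {poly R}) n : (size p <= n -> size q <= n -> size (p + q)%R <= n)%N.
  by move=> ? ?; apply: leq_trans (size_polyD p q) _; rewrite geq_max; apply/andP.
rewrite /pentanomial_tail.
apply: (size_D_le); last by rewrite size_poly1; lia.
apply: (size_D_le); last by rewrite size_polyX; lia.
by apply: (size_D_le); rewrite size_polyXn; lia.
Qed.

Lemma coef_mul_tail p k : (p * tail)`_k =
  (if (k < b + 1)%N then 0 else p`_(k - (b + 1))) + (if (k < b)%N then 0 else p`_(k - b))
  + (if k == 0%N then 0 else p`_k.-1) + p`_k.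
Proof. by rewrite /pentanomial_tail !mulrDr mulr1 !coefD !coefMXn coefMX. Qed.

Lemma coef_mul_tail0 p : (0 < b)%N -> (p * tail)`_0 = p`_0.
Proof. by move=> b_gt0; rewrite coef_mul_tail !ifT ?add0r //; lia. Qed.

Lemma coef_mul_tail_low p j : (j.+1 < b)%N -> (p * tail)`_j.+1 = p`_j + p`_j.+1.
Proof. by move=> lt_jb; rewrite coef_mul_tail !ifT ?add0r //; lia. Qed.

Lemma coef_mul_tail_mid p : (0 < b)%N -> (p * tail)`_b = p`_0 + p`_b.-1 + p`_b.
Proof. by move=> b_gt0; rewrite coef_mul_tail ifT ?ifF ?add0r ?subnn //; lia. Qed.

Lemma coef_mul_tail_high p j :
  (p * tail)`_(b + j).+1 = p`_j + p`_j.+1 + p`_(b + j) + p`_(b + j).+1.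
Proof.
rewrite coef_mul_tail !ifF //; try lia.
have -> : ((b + j).+1 - (b + 1) = j)%N by lia.
by have -> : ((b + j).+1 - b = j.+1)%N by lia.
Qed.

End TailCoefficients.
End PolyReduction.

(* Wire [4b+1+j] carries [u_j] for [j < 2b-1]; since [h_(2b) = 0], the input wire [4b]
   already carries [u_(2b-1)]. *)
Definition u_wire (b j : nat) : nat := if j < (2 * b).-1 then 4 * b + 1 + j else 4 * b.

Definition layer1 (b : nat) : seq (nat * nat) :=
  [seq (2 * b + 1 + j, 2 * b + 1 + j.+1) | j <- iota 0 (2 * b).-1] ++
  [:: (b, u_wire b (2 * b).-1)].

Definition layer2 (b : nat) : seq (nat * nat) :=
  [seq (u_wire b k, u_wire b (b + k).+1) | k <- iota 0 b.-1] ++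
  [seq (k.+1, u_wire b (b + k)) | k <- iota 0 b.-1] ++
  [:: (2 * b + 1, u_wire b b); (6 * b, u_wire b b.-1); (2 * b, u_wire b b.-1)].

Definition layer3 (b : nat) : seq (nat * nat) :=
  [seq ((b + k).+1, 6 * b + 1 + k) | k <- iota 0 b.-1] ++
  [seq (6 * b + 1 + k, 7 * b + k) | k <- iota 0 b.-1] ++
  [:: (0, 8 * b - 1); (8 * b - 1, 8 * b)].

Definition out_wire (b k : nat) : nat :=
  if k == 0 then 10 * b
  else if k < b then 9 * b + k
  else if k == b then 10 * b + 1
  else if k < 2 * b then 7 * b + 1 + k
  else 8 * b + 1.

Definition circuit (b : nat) : slp :=
  SLP (layer1 b ++ layer2 b ++ layer3 b) [seq out_wire b k | k <- iota 0 (2 * b + 1)].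

Definition circuit_eval (A : Type) (x0 : A) (op : A -> A -> A) (w : seq A) (b : nat) :=
  eval_layer x0 op (eval_layer x0 op (eval_layer x0 op w (layer1 b)) (layer2 b)) (layer3 b).

Section CircuitShape.
Variables (b : nat) (hb : 2 <= b).

Lemma size_layer1 : size (layer1 b) = 2 * b.
Proof. by rewrite size_cat size_map size_iota /=; lia. Qed.

Lemma size_layer2 : size (layer2 b) = 2 * b.-1 + 3.
Proof. by rewrite !size_cat !size_map size_iota /=; lia. Qed.

Lemma size_layer3 : size (layer3 b) = 2 * b.-1 + 2.
Proof. by rewrite !size_cat !size_map size_iota /=; lia. Qed.

Lemma circuit_xors : slp_xors (circuit b) = 6 * b + 1.
Proof.
rewrite /slp_xors (size_cat (layer1 b)) (size_cat (layer2 b)).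
by rewrite size_layer1 size_layer2 size_layer3; lia.
Qed.

Lemma u_wire_lt j : u_wire b j < 6 * b.
Proof. by rewrite /u_wire; case: ifP; lia. Qed.

Lemma reads_layer1 : reads_below (4 * b + 1) (layer1 b).
Proof.
rewrite reads_below_cat /= /u_wire ltnn; apply/andP; split; last lia.
by apply: reads_below_iota => j /=; lia.
Qed.

Lemma reads_layer2 : reads_below (6 * b + 1) (layer2 b).
Proof.
have uP j : u_wire b j < 6 * b + 1 by have := u_wire_lt j; lia.
rewrite !reads_below_cat /= !uP /= !andbT; apply/and5P; split; try lia.
- by apply: reads_below_iota => k _ /=; rewrite !uP.
- by apply: reads_below_iota => k lt_k /=; rewrite uP andbT; lia.
Qed.

Lemma reads_layer3 : reads_below (8 * b + 2) (layer3 b).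
Proof.
rewrite !reads_below_cat /= andbT; apply/and4P; split; try lia.
- by apply: reads_below_iota => k lt_k /=; lia.
- by apply: reads_below_iota => k lt_k /=; lia.
Qed.

Lemma circuit_wf : slp_wf (4 * b + 1) (circuit b).
Proof.
apply: slp_wf_layers3.
- exact: reads_layer1.
- by apply: reads_below_le reads_layer2; rewrite size_layer1; lia.
- by apply: reads_below_le reads_layer3; rewrite size_layer1 size_layer2; lia.
rewrite -/(slp_xors (circuit b)) circuit_xors all_map.
apply/allP => k _ /=; change nat in k.
by rewrite /out_wire; repeat case: ifP => ?; lia.
Qed.

End CircuitShape.

Section CircuitWiring.
Variables (b : nat) (A : Type) (x0 : A) (op : A -> A -> A) (w : seq A).
Hypotheses (hb : 2 <= b) (hw : size w = 4 * b + 1).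
Local Notation wire i := (nth x0 (circuit_eval x0 op w b) i).

Let reads1 : reads_below (size w) (layer1 b).
Proof. by rewrite hw; exact: reads_layer1. Qed.

Let reads2 : reads_below (size w + size (layer1 b)) (layer2 b).
Proof. by apply: reads_below_le (reads_layer2 hb); rewrite hw size_layer1 //; lia. Qed.

Let reads3 : reads_below (size w + size (layer1 b) + size (layer2 b)) (layer3 b).
Proof.
by apply: reads_below_le (reads_layer3 hb); rewrite hw size_layer1 // size_layer2; lia.
Qed.

Lemma foldl_gate_step_circuit :
  foldl (gate_step x0 op) w (layer1 b ++ layer2 b ++ layer3 b) = circuit_eval x0 op w b.
Proof. exact: foldl_gate_step_layers3. Qed.

Lemma wire_input i : i < 4 * b + 1 -> wire i = nth x0 w i.
Proof. by rewrite -hw; apply: nth_layers3_input. Qed.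

Lemma wire_u j : j < (2 * b).-1 ->
  wire (4 * b + 1 + j) = op (wire (2 * b + 1 + j)) (wire (2 * b + 1 + j.+1)).
Proof.
move=> lt_j; rewrite -hw nth_layers3_gate1 //; last by rewrite size_layer1 //; lia.
by rewrite nth_cat_map_iota.
Qed.

Lemma wire_du_last : wire (6 * b) = op (wire b) (wire (u_wire b (2 * b).-1)).
Proof.
have -> : 6 * b = size w + ((2 * b).-1 + 0) by rewrite hw; lia.
rewrite nth_layers3_gate1 //; last by rewrite size_layer1 //; lia.
by rewrite nth_cat_map_iota_tail.
Qed.

Lemma wire_uu k : k < b.-1 ->
  wire (6 * b + 1 + k) = op (wire (u_wire b k)) (wire (u_wire b (b + k).+1)).
Proof.
move=> lt_k; have -> : 6 * b + 1 + k = size w + size (layer1 b) + k.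
  by rewrite hw size_layer1 //; lia.
rewrite nth_layers3_gate2 //; last by rewrite size_layer2; lia.
by rewrite nth_cat_map_iota.
Qed.

Lemma wire_du k : k < b.-1 -> wire (7 * b + k) = op (wire k.+1) (wire (u_wire b (b + k))).
Proof.
move=> lt_k; have -> : 7 * b + k = size w + size (layer1 b) + (b.-1 + k).
  by rewrite hw size_layer1 //; lia.
rewrite nth_layers3_gate2 //; last by rewrite size_layer2; lia.
by rewrite nth_cat_map_iota_tail nth_cat_map_iota.
Qed.

Lemma wire_hu : wire (8 * b - 1) = op (wire (2 * b + 1)) (wire (u_wire b b)).
Proof.
have -> : 8 * b - 1 = size w + size (layer1 b) + (b.-1 + (b.-1 + 0)).
  by rewrite hw size_layer1 //; lia.
rewrite nth_layers3_gate2 //; last by rewrite size_layer2; lia.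
by rewrite !nth_cat_map_iota_tail.
Qed.

Lemma wire_du_mid : wire (8 * b) = op (wire (6 * b)) (wire (u_wire b b.-1)).
Proof.
have -> : 8 * b = size w + size (layer1 b) + (b.-1 + (b.-1 + 1)).
  by rewrite hw size_layer1 //; lia.
rewrite nth_layers3_gate2 //; last by rewrite size_layer2; lia.
by rewrite !nth_cat_map_iota_tail.
Qed.

Lemma wire_du_top : wire (8 * b + 1) = op (wire (2 * b)) (wire (u_wire b b.-1)).
Proof.
have -> : 8 * b + 1 = size w + size (layer1 b) + (b.-1 + (b.-1 + 2)).
  by rewrite hw size_layer1 //; lia.
rewrite nth_layers3_gate2 //; last by rewrite size_layer2; lia.
by rewrite !nth_cat_map_iota_tail.
Qed.

Lemma wire_out_high k : k < b.-1 ->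
  wire (8 * b + 2 + k) = op (wire (b + k).+1) (wire (6 * b + 1 + k)).
Proof.
move=> lt_k; have -> : 8 * b + 2 + k = size w + size (layer1 b) + size (layer2 b) + k.
  by rewrite hw size_layer1 // size_layer2; lia.
rewrite nth_layers3_gate3 //; last by rewrite size_layer3; lia.
by rewrite nth_cat_map_iota.
Qed.

Lemma wire_out_low k : k < b.-1 ->
  wire (9 * b + 1 + k) = op (wire (6 * b + 1 + k)) (wire (7 * b + k)).
Proof.
move=> lt_k.
have -> : 9 * b + 1 + k = size w + size (layer1 b) + size (layer2 b) + (b.-1 + k).
  by rewrite hw size_layer1 // size_layer2; lia.
rewrite nth_layers3_gate3 //; last by rewrite size_layer3; lia.
by rewrite nth_cat_map_iota_tail nth_cat_map_iota.
Qed.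

Lemma wire_out0 : wire (10 * b) = op (wire 0) (wire (8 * b - 1)).
Proof.
have -> : 10 * b = size w + size (layer1 b) + size (layer2 b) + (b.-1 + (b.-1 + 0)).
  by rewrite hw size_layer1 // size_layer2; lia.
rewrite nth_layers3_gate3 //; last by rewrite size_layer3; lia.
by rewrite !nth_cat_map_iota_tail.
Qed.

Lemma wire_out_mid : wire (10 * b + 1) = op (wire (8 * b - 1)) (wire (8 * b)).
Proof.
have -> : 10 * b + 1 = size w + size (layer1 b) + size (layer2 b) + (b.-1 + (b.-1 + 1)).
  by rewrite hw size_layer1 // size_layer2; lia.
rewrite nth_layers3_gate3 //; last by rewrite size_layer3; lia.
by rewrite !nth_cat_map_iota_tail.
Qed.

End CircuitWiring.

Section CircuitDepth.
Variables (b : nat) (hb : 2 <= b).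
Local Notation depths := (slp_wire_depths (4 * b + 1) (layer1 b ++ layer2 b ++ layer3 b)).

Lemma circuit_wire_depths : depths = circuit_eval 0 depth_step (nseq (4 * b + 1) 0) b.
Proof. exact: (foldl_gate_step_circuit 0 depth_step hb (size_nseq _ _)). Qed.

Lemma circuit_depths_le3 i : nth 0 depths i <= 3.
Proof.
have : all (fun x => x <= 3) depths.
  rewrite circuit_wire_depths; do 3 apply: eval_layer_depth_le.
  by apply/allP => x /nseqP[-> _].
by case: (ltnP i (size depths)) => [/(mem_nth 0) lt_i /allP -> | /(nth_default 0) ->].
Qed.

Lemma depth_out0 : nth 0 depths (10 * b) = 3.
Proof.
rewrite circuit_wire_depths wire_out0 ?size_nseq // wire_hu ?size_nseq //.
rewrite /u_wire ifT; last by lia.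
rewrite wire_u ?size_nseq //; last by lia.
by rewrite !wire_input ?size_nseq ?nth_nseq ?if_same //; lia.
Qed.

Lemma circuit_depth : slp_depth (4 * b + 1) (circuit b) = 3.
Proof.
apply/eqP; rewrite eqn_leq; apply/andP; split.
  by apply/bigmax_leqP_seq => o _ _; apply: circuit_depths_le3.
apply: (bigmax_sup_seq (10 * b)); rewrite ?depth_out0 //.
by apply/mapP; exists 0; rewrite ?mem_iota //; lia.
Qed.

End CircuitDepth.

Section Reduction.
Local Open Scope ring_scope.

Fact pchar_F2 : 2 \in [pchar 'F_2].
Proof. exact: pchar_Fp. Qed.

Variables (b : nat) (s : seq 'F_2).
Hypotheses (hb : (2 <= b)%N) (hs : size s = (4 * b + 1)%N).

Definition high (j : nat) : 'F_2 := s`_(2 * b + 1 + j).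

Definition high_pair (j : nat) : 'F_2 := high j + high j.+1.

Local Notation H := (drop_poly (2 * b + 1) (Poly s)).
Local Notation tail := (pentanomial_tail b : {poly 'F_2}).
Local Notation rem := (Poly s %% pentanomial b).

Lemma high_eq0 j : (2 * b <= j)%N -> high j = 0.
Proof. by move=> le_j; rewrite /high nth_default // hs; lia. Qed.

Lemma high_pair_eq0 j : (2 * b <= j)%N -> high_pair j = 0.
Proof. by move=> le_j; rewrite /high_pair !high_eq0 ?addr0 //; lia. Qed.

Lemma coef_high j : H`_j = high j.
Proof. by rewrite coef_drop_poly coef_Poly addnC. Qed.

Lemma coef_fold j : (drop_poly (2 * b + 1) (H * tail))`_j = high_pair (b + j).
Proof.
rewrite coef_drop_poly (_ : j + (2 * b + 1) = (b + (b + j)).+1)%N; last by lia.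
rewrite coef_mul_tail_high !coef_high (@high_eq0 (b + (b + j))); last by lia.
by rewrite (@high_eq0 (b + (b + j)).+1) ?addr0 //; lia.
Qed.

Lemma coef_rem k : (k < 2 * b + 1)%N ->
  rem`_k = s`_k + (H * tail)`_k + (drop_poly (2 * b + 1) (H * tail) * tail)`_k.
Proof.
move=> lt_k; rewrite pentanomialE modp_XnD_fold2; last 2 first.
- by apply: leq_trans (size_pentanomial_tail _ _) _; lia.
- apply: leq_trans (leq_add (size_Poly s) (leq_mul (leqnn 2) (size_pentanomial_tail _ _))) _.
  by rewrite hs; lia.
by rewrite !coefD coefN (oppr_pchar2 pchar_F2) !coef_take_poly lt_k coef_Poly.
Qed.

Lemma coef_rem0 : rem`_0 = s`_0 + high 0 + high_pair b.
Proof.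
rewrite coef_rem; last by lia.
by rewrite !coef_mul_tail0 ?coef_high ?coef_fold ?addn0 //; lia.
Qed.

Lemma coef_rem_low j : (j.+1 < b)%N ->
  rem`_j.+1 = s`_j.+1 + high_pair j + high_pair (b + j) + high_pair (b + j).+1.
Proof.
move=> lt_j; rewrite coef_rem; last by lia.
by rewrite !coef_mul_tail_low // !coef_high !coef_fold addnS !addrA.
Qed.

Lemma coef_rem_mid :
  rem`_b = s`_b + high 0 + high_pair b.-1 + high_pair b + high_pair (2 * b).-1.
Proof.
rewrite coef_rem; last by lia.
rewrite !coef_mul_tail_mid; try lia.
rewrite !coef_high !coef_fold addn0 (@high_pair_eq0 (b + b)); last by lia.
have -> : (b + b.-1 = (2 * b).-1)%N by lia.
have -> : high b = high b.-1.+1 by rewrite prednK //; lia.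
by rewrite /high_pair; ring.
Qed.

Lemma coef_rem_high j : (j.+1 < b)%N ->
  rem`_(b + j).+1 = s`_(b + j).+1 + high_pair j + high_pair (b + j).+1.
Proof.
move=> lt_j; rewrite coef_rem; last by lia.
rewrite !coef_mul_tail_high !coef_high !coef_fold.
rewrite (@high_pair_eq0 (b + (b + j))) ?(@high_pair_eq0 (b + (b + j).+1)); try lia.
(* [u_(b+j)] comes out of both folds and cancels. *)
rewrite -[RHS]addr0 -[X in _ = _ + X](addrr_pchar2 pchar_F2 (high_pair (b + j))).
by rewrite /high_pair !addnS; ring.
Qed.

Lemma coef_rem_top : rem`_(2 * b) = s`_(2 * b) + high_pair b.-1.
Proof.
have -> : (2 * b = (b + b.-1).+1)%N by lia.
rewrite coef_rem; last by lia.
rewrite !coef_mul_tail_high !coef_high !coef_fold (@high_eq0 (b + b.-1).+1); last by lia.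
rewrite (@high_pair_eq0 (b + b.-1.+1)) ?(@high_pair_eq0 (b + (b + b.-1))); try lia.
rewrite (@high_pair_eq0 (b + (b + b.-1).+1)); last by lia.
rewrite -[RHS]addr0 -[X in _ = _ + X](addrr_pchar2 pchar_F2 (high (b + b.-1))).
by rewrite /high_pair (@high_eq0 (b + b.-1).+1); [ring | lia].
Qed.

Local Notation bit i := (nth 0 (circuit_eval 0 +%R s b) i).

Lemma bit_input i : (i < 4 * b + 1)%N -> bit i = s`_i.
Proof. exact: wire_input. Qed.

Lemma bit_u j : (j < 2 * b)%N -> bit (u_wire b j) = high_pair j.
Proof.
move=> lt_j; rewrite /u_wire; case: ifP => [lt_j' | ge_j'].
  by rewrite wire_u // !bit_input //; lia.
rewrite bit_input; last by lia.
rewrite /high_pair (@high_eq0 j.+1) ?addr0 /high; last by lia.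
by congr (_`_ _); lia.
Qed.

Lemma out_wire_correct k : (k < 2 * b + 1)%N -> bit (out_wire b k) = rem`_k.
Proof.
move=> lt_k; rewrite /out_wire; case: eqP => [-> | /eqP k_neq0].
  rewrite coef_rem0 wire_out0 // wire_hu // bit_u ?bit_input; try lia.
  by rewrite /high addn0 addrA.
case: ltnP => [lt_kb | le_bk].
  have [j -> lt_j] : exists2 j, k = j.+1 & (j < b.-1)%N by exists k.-1; lia.
  rewrite coef_rem_low; last by lia.
  rewrite (_ : 9 * b + j.+1 = 9 * b + 1 + j)%N; last by lia.
  rewrite wire_out_low // wire_uu // wire_du // !bit_u ?bit_input; try lia.
  by ring.
case: eqP => [-> | /eqP k_neq_b].
  rewrite coef_rem_mid wire_out_mid // wire_hu // wire_du_mid // wire_du_last //.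
  rewrite !bit_u ?bit_input; try lia.
  by rewrite /high addn0; ring.
case: ltnP => [lt_k2b | le_2bk].
  have [j -> lt_j] : exists2 j, k = (b + j).+1 & (j < b.-1)%N by exists (k - b).-1; lia.
  rewrite coef_rem_high; last by lia.
  rewrite (_ : 7 * b + 1 + (b + j).+1 = 8 * b + 2 + j)%N; last by lia.
  rewrite wire_out_high // wire_uu // !bit_u ?bit_input; try lia.
  by rewrite addrA.
have -> : k = (2 * b)%N by lia.
by rewrite coef_rem_top wire_du_top // bit_u ?bit_input //; lia.
Qed.

End Reduction.

Local Open Scope ring_scope.

Lemma sum_tnth_Poly n (t : n.-tuple 'F_2) : \sum_(i < n) tnth t i *: 'X^i = Poly t.
Proof.
rewrite (eq_bigr (fun i : 'I_n => t`_i *: 'X^i)) => [|i _]; last by rewrite (tnth_nth 0).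
rewrite -poly_def; apply/polyP => i; rewrite coef_poly coef_Poly.
by case: ltnP => // le_n; rewrite nth_default ?size_tuple.
Qed.

Theorem theorem1 (b : nat) (hb : (2 <= b)%N) :
  let m := (2 * b + 1)%N in
  exists P : slp,
    [/\ slp_wf (2 * m - 1) P,
        slp_xors P = (6 * b + 1)%N,
        slp_depth (2 * m - 1) P = 3%N,
        size (slp_outs P) = m &
        forall d : (2 * m - 1).-tuple 'F_2,
          let D : {poly 'F_2} := \sum_(i < 2 * m - 1) tnth d i *: 'X^i in
          forall k : 'I_m, slp_out P d k = (D %% pentanomial b)`_k].
Proof.
move=> m; exists (circuit b); have -> : (2 * m - 1 = 4 * b + 1)%N by rewrite /m; lia.
split.
- exact: circuit_wf.
- exact: circuit_xors.
- exact: circuit_depth.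
- by rewrite size_map size_iota.
move=> d D k; have hd : size d = (4 * b + 1)%N by rewrite size_tuple.
rewrite /slp_out /D sum_tnth_Poly /= (nth_map 0%N) ?nth_iota ?size_iota //.
rewrite /slp_wires (foldl_gate_step_circuit 0 +%R hb hd) add0n.
exact: out_wire_correct.
Qed.
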